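(* Let $N\ge2$ and let $F$ be any marginal distribution as in the context. Define, for $r\in(0,1]$, $$L(r)=\int_{[0,r]}\frac{x^{\frac N{N-1}}}{r^{\frac1{N-1}}}\,dF(x)+r(1-F(r)),$$ and let $r^*$ be a maximizer of $L$ over $(0,1]$. Then the revenue guarantee of the second price auction with random reserve distributed according to $G_{r^*}(x)=(x/r^* )^{\frac1{N-1}}$, $x\in[0,r^*]$, is strictly greater than the revenue guarantee of the posted price mechanism, which equals $\max_{x\in[0,1]}x(1-F(x))$. That is, this auction robustly dominates the posted price mechanism.
   Context: A single indivisible good is sold to $N$ bidders with private values $v_i\in[0,1]$, each with the same marginal cdf $F$ whose support is $[0,1]$ (point masses allowed). $\Pi(F)$ is the set of probability measures on $[0,1]^N$ with all one-dimensional marginals equal to $F$. For a mechanism $(q,t)$ (allocation $q:[0,1]^N\to[0,1]^N$ with $\sum_iq_i\le1$, payments $t:[0,1]^N\to\mathbb{R}^N$) used with truthful bidding, its revenue guarantee is $\inf_{\pi\in\Pi(F)}\int\sum_it_i\,d\pi$. The second price auction with random reserve distributed as a cdf $G$: a reserve $\rho\sim G$ is drawn independently; a highest bidder (ties broken uniformly at random) wins if her bid is at least $\rho$ and pays $\max(\rho,\text{second highest bid})$; equivalently, a unique highest bidder with value $v_{(1)}$ receives the good with probability $G(v_{(1)})$ and pays $v_{(1)}G(v_{(1)})-\int_{v_{(2)}}^{v_{(1)}}G(s)\,ds$. The posted price mechanism posts a price and sells to a bidder willing to pay it; its revenue guarantee (the monopoly profit against the maximally positively correlated structure) is $\max_{x\in[0,1]}x(1-F(x))$.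 A mechanism $M_1$ robustly dominates $M_2$ if the revenue guarantee of $M_1$ is strictly greater than that of $M_2$ for every marginal distribution. *)

From HB Require Import structures.
From mathcomp Require Import all_boot all_order all_algebra.
From mathcomp Require Import all_classical all_reals all_analysis.
Set Implicit Arguments. Unset Strict Implicit. Unset Printing Implicit Defensive.
Import Order.TTheory GRing.Theory Num.Theory.
Local Open Scope classical_set_scope.
Local Open Scope ring_scope.

Section robust_auction.
Context (R : realType).

(* The marginal distribution F, given as a (Borel) probability measure mu on R;
   its cdf is F(x) = mu(]-oo, x]). *)
Definition cdf (mu : probability R R) (x : R) : R := fine (mu `]-oo, x]%classic).

(* "F has support [0,1]": all mass in [0,1], and every point of [0,1]
   lies in the (closed) support, i.e. each of its neighbourhoods has
   positive mass. *)
Definition support01 (mu : probability R R) : Prop :=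
  mu `[0, 1]%classic = 1%E /\
  forall x : R, 0 <= x <= 1 -> forall e : R, 0 < e -> (0 < mu (`](x - e)%R, (x + e)%R[%classic : set R))%E.

(* Pi(F): probability measures on [0,1]^N (here on R^N, the N-fold product
   with its product sigma-algebra) all of whose one-dimensional marginals
   equal F. *)
Definition PiF (N : nat) (mu : probability R R) : set (probability (N.-tuple R) R) :=
  [set pi | forall (i : 'I_N) (A : set R), measurable A ->
            pi ((fun v : N.-tuple R => tnth v i) @^-1` A) = mu A].

Definition revenue_guarantee (N : nat) (mu : probability R R)
    (rev : N.-tuple R -> R) : \bar R :=
  ereal_inf [set (\int[pi]_v (rev v)%:E)%E | pi in @PiF N mu].

(* highest and second highest bid (with multiplicity) of a profile in [0,1]^N *)
Definition highest (N : nat) (v : N.-tuple R) : R :=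
  \big[Num.max/0]_(i < N) tnth v i.
Definition second_highest (N : nat) (v : N.-tuple R) : R :=
  \big[Num.max/0]_(i < N) \big[Num.max/0]_(j < N | j != i)
     Num.min (tnth v i) (tnth v j).

Definition spa_random_reserve_revenue (N : nat) (G : R -> R)
    (v : N.-tuple R) : R :=
  highest v * G (highest v)
  - Rintegral lebesgue_measure `[second_highest v, highest v]%classic G.

Definition G_reserve (N : nat) (r : R) (x : R) : R :=
  if x < 0 then 0
  else if x <= r then powR (x / r) (1 / (N%:R - 1))
  else 1.

Definition L_fun (N : nat) (mu : probability R R) (r : R) : R :=
  Rintegral mu `[0, r]%classic
    (fun x => powR x (N%:R / (N%:R - 1)) / powR r (1 / (N%:R - 1)))
  + r * (1 - cdf mu r).

Definition posted_price_guarantee (mu : probability R R) : R :=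
  sup [set x * (1 - cdf mu x) | x in `[0, 1]%classic].

End robust_auction.

Arguments PiF {R} N mu.
Arguments revenue_guarantee {R} N mu rev.
Arguments highest {R} N v.
Arguments second_highest {R} N v.
Arguments spa_random_reserve_revenue {R} N G v.
Arguments G_reserve {R} N r x.
Arguments L_fun {R} N mu r.

From Pilot Require Import Defs.
From HB Require Import structures.
From mathcomp Require Import all_boot all_order all_algebra.
From mathcomp Require Import all_classical all_reals all_analysis.
From mathcomp Require Import ring lra measurable_realfun.
Import Order.TTheory GRing.Theory Num.Theory.
Import numFieldNormedType.Exports.
Local Open Scope classical_set_scope.
Local Open Scope ring_scope.
Set Implicit Arguments. Unset Strict Implicit. Unset Printing Implicit Defensive.

(** Fix r > 0, let G = G_r, let Phi ([G_primitive]) be its primitive vanishing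
   at 0, and let phi ([revenue_share]) be x^(N/(N-1)) / (N r^(1/(N-1))) on
   [0, r] and r / N above r.  If h and s are the highest and second highest
   values of a profile, the revenue is h G(h) - (Phi h - Phi s) = phi h + Phi s;
   as Phi >= (N-1) phi and phi is nondecreasing, it dominates sum_i phi(v_i)
   pointwise.  Integrating against any pi in Pi(F) bounds the revenue guarantee
   below by N int phi dF = L(r).

   Conversely x (1 - F x) = L(x) - int_[0,x] t^(N/(N-1)) / x^(1/(N-1)) dF.  For
   x >= d this integral is at least (d/2)^(N/(N-1)) F(]d/2, d[), which is
   positive because F has support [0,1], while prices x < d earn at most x.
   Taking d small gives sup_x x (1 - F x) < max L = L r*. *)

(* The revenue of the auction is not shown to be measurable, hence this variant
   of [ge0_le_integral]: both integrals are suprema over simple functions below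
   the integrand. *)
Lemma ge0_le_integral_nonmeasurable d (T : measurableType d) (R : realType)
    (mu : {measure set T -> \bar R}) (f g : T -> \bar R) :
  (forall x, (0 <= f x)%E) -> (forall x, (f x <= g x)%E) ->
  (\int[mu]_x f x <= \int[mu]_x g x)%E.
Proof.
move=> f0 fg; have g0 x : (0 <= g x)%E := le_trans (f0 x) (fg x).
rewrite !ge0_integralE //=; apply: ereal_sup_le => _ [h hf <-].
exists h => //= x; apply: le_trans (hf x) _.
by rewrite /patch mem_set.
Qed.

Section order_statistics.
Variables (R : realType) (N : nat).
Implicit Type v : N.-tuple R.

Lemma highest_ge v i : tnth v i <= highest N v.
Proof. exact: le_bigmax. Qed.

Lemma highest_ge0 v : 0 <= highest N v.
Proof. exact: bigmax_ge_id. Qed.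

Lemma second_highest_ge0 v : 0 <= second_highest N v.
Proof. exact: bigmax_ge_id. Qed.

Lemma second_highest_le v : second_highest N v <= highest N v.
Proof.
apply: bigmax_le => [|i _]; first exact: highest_ge0.
apply: bigmax_le => [|j _]; first exact: highest_ge0.
by rewrite ge_min highest_ge.
Qed.

Lemma second_highest_ge v i0 j : (forall i, tnth v i <= tnth v i0) ->
  j != i0 -> tnth v j <= second_highest N v.
Proof.
move=> i0_max ji0; apply: le_trans (le_bigmax _ _ i0).
apply: le_trans (le_bigmax_cond 0 (fun k => Num.min (tnth v i0) (tnth v k)) ji0).
by rewrite le_min i0_max lexx.
Qed.

Lemma sum_le_highest_second_highest v (f : R -> R) : (0 < N)%N ->
  {homo f : x y / x <= y} ->
  \sum_(i < N) f (tnth v i) <= f (highest N v) + (N%:R - 1) * f (second_highest N v).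
Proof.
move=> N0 f_nd.
have [i0 _ i0_max] := @arg_maxP _ _ _ (Ordinal N0) xpredT (tnth v) isT.
rewrite (bigD1 i0) //= lerD ?f_nd ?highest_ge //.
apply: le_trans (_ : \sum_(j < N | j != i0) f (second_highest N v) <= _).
  by apply: ler_sum => j ji0; apply/f_nd/(second_highest_ge _ ji0) => i; exact: i0_max.
rewrite sumr_const cardC1 card_ord -[f _ *+ _]mulr_natl.
by have -> : (N.-1)%:R = N%:R - 1 :> R by rewrite -{2}(prednK N0) -natr1 addrK.
Qed.

End order_statistics.

Section power_functions.
Variable R : realType.

Lemma derivable_powRMr (e c x : R) : 0 < x ->
  derivable (fun y : R => powR y e * c) x 1.
Proof.
move=> x0; apply/derivable1_diffP/differentiableM; last exact: differentiable_cst.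
by apply/derivable1_diffP/derivable_powR; rewrite in_itv /= x0.
Qed.

Lemma powRMr_derivable_oo_LRcontinuous (e c a b : R) : 0 < e -> 0 <= a -> a < b ->
  derivable_oo_LRcontinuous (fun y : R => powR y e * c) a b.
Proof.
have cont x : 0 < x -> {for x, continuous (fun y : R => powR y e * c)}.
  by move=> x0; apply/differentiable_continuous/derivable1_diffP/derivable_powRMr.
move=> e0 a0 ab; split.
- move=> x; rewrite in_itv /= => /andP[ax _]; apply: derivable_powRMr.
  exact: le_lt_trans ax.
- move: a0; rewrite le_eqVlt => /predU1P[<-|a0]; last exact/cvg_at_right_filter/cont.
  rewrite powR0 ?gt_eqF // mul0r.
  have lim0 := @cvgMr_tmp _ _ _ _ _ _ c (powR_cvg0 e0).
  by rewrite mul0r in lim0; exact: lim0.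
- exact/cvg_at_left_filter/cont/(le_lt_trans a0 ab).
Qed.

End power_functions.

Section probability_on_the_line.
Variables (R : realType) (mu : probability R R).

Lemma cdf_ge0 x : 0 <= Defs.cdf mu x.
Proof. exact: fine_ge0. Qed.

Lemma cdf_le1 x : Defs.cdf mu x <= 1.
Proof. by rewrite -lee_fin fineK ?fin_num_measure ?probability_le1. Qed.

Lemma probability_itv_gt x : mu `]x, +oo[%classic = (1 - Defs.cdf mu x)%:E.
Proof.
have : (mu `]-oo, x]%classic + mu `]x, +oo[%classic = 1)%E.
  rewrite -measureU //; first by rewrite itv_setU_setT; exact: probability_setT.
  by rewrite -subset0 => y []; rewrite /= !in_itv /= andbT => yx /(le_lt_trans yx); rewrite ltxx.
rewrite /Defs.cdf -(fineK (fin_num_measure _ _ _)) //.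
by rewrite -[mu `]x, +oo[%classic]fineK ?fin_num_measure // -EFinD => -[<-]; rewrite addrC addKr.
Qed.

Lemma integral_tnth_PiF N (pi : probability (N.-tuple R) R) (i : 'I_N)
    (f : R -> \bar R) :
  PiF N mu pi -> measurable_fun setT f -> (forall x, (0 <= f x)%E) ->
  (\int[pi]_v f (tnth v i) = \int[mu]_x f x)%E.
Proof.
move=> pi_mu mf f0; have mt := @measurable_tnth _ R N i.
transitivity (\int[pushforward pi (fun v => tnth v i)]_x f x)%E.
  by rewrite ge0_integral_pushforward // preimage_setT.
by apply: eq_measure_integral => A mA _; exact: pi_mu.
Qed.

End probability_on_the_line.

Section robust_auction.
Variables (R : realType) (N : nat) (mu : probability R R).
Hypothesis N_ge2 : (2 <= N)%N.

Local Notation k := (N%:R - 1 : R).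
Local Notation q := (1 / (N%:R - 1) : R).
Local Notation p := (N%:R / (N%:R - 1) : R).

Let N_gt0 : (0 : R) < N%:R.
Proof. by rewrite ltr0n; case: N N_ge2. Qed.

Let k_gt0 : 0 < k.
Proof. by rewrite subr_gt0 ltr1n. Qed.

Let q_gt0 : 0 < q.
Proof. by rewrite divr_gt0. Qed.

Let p_eq : p = q + 1.
Proof. by field; rewrite gt_eqF. Qed.

Let p_gt0 : 0 < p.
Proof. by rewrite p_eq addr_gt0. Qed.

Let powR_p x : 0 <= x -> powR x p = x * powR x q.
Proof. by move=> x0; rewrite -mulr_powRB1 // p_eq addrK. Qed.

Definition L_integral (x : R) : R :=
  Rintegral mu `[0, x] (fun t => powR t p / powR x q).

Lemma L_funE x : L_fun N mu x = L_integral x + x * (1 - Defs.cdf mu x).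
Proof. by []. Qed.

Lemma measurable_L_integrand x (D : set R) : measurable D ->
  measurable_fun D (fun t => powR t p / powR x q).
Proof.
by move=> mD; apply: measurable_funM => //; exact: measurable_funS (measurable_powR _).
Qed.

Lemma L_integrand_ge0 x t : 0 <= powR t p / powR x q.
Proof. by rewrite divr_ge0 ?powR_ge0. Qed.

Lemma L_integrand_le x t : 0 <= t <= x -> powR t p / powR x q <= x.
Proof.
case/andP=> t0 tx; have x0 := le_trans t0 tx.
have [->|xpos] := eqVneq x 0; first by rewrite powR0 ?gt_eqF // invr0 mulr0.
have xq_gt0 : 0 < powR x q by rewrite powR_gt0 // lt0r xpos.
rewrite ler_pdivrMr // -powR_p //.
by apply: ge0_ler_powR tx; rewrite ?nnegrE // ltW.
Qed.

Lemma L_integralE x : 0 < x ->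
  (L_integral x)%:E = (\int[mu]_(t in `[0%R, x]) (powR t p / powR x q)%:E)%E.
Proof.
move=> x0; rewrite /L_integral /Rintegral fineK // ge0_fin_numE; last first.
  by apply: integral_ge0 => t _; rewrite lee_fin L_integrand_ge0.
apply: (le_lt_trans (y := (\int[mu]_(t in `[0%R, x]) (cst x%:E) t)%E)).
  apply: ge0_le_integral => //.
  - by move=> t _; rewrite lee_fin; exact: L_integrand_ge0.
  - by apply/measurable_EFinP; exact: measurable_L_integrand.
  - by move=> t; rewrite /= in_itv /= => t0x; rewrite lee_fin; exact: L_integrand_le.
by rewrite integral_cst // ltey_eq fin_numM // fin_num_measure.
Qed.

Section reserve.
Variable r : R.
Hypothesis r_gt0 : 0 < r.

Local Notation G := (G_reserve N r).

Let rq_gt0 : 0 < powR r q.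
Proof. exact: powR_gt0. Qed.

Definition Gpow (x : R) : R := powR x q / powR r q.
Definition Gpow_primitive (x : R) : R := powR x p * (k / N%:R / powR r q).
Definition G_primitive (x : R) : R :=
  if x <= r then Gpow_primitive x else x - r / N%:R.

Lemma G_reserveE x : 0 <= x <= r -> G x = Gpow x.
Proof.
case/andP=> x0 xr; rewrite /G_reserve ltNge x0 /= xr /Gpow.
apply: (mulIf (lt0r_neq0 rq_gt0)).
rewrite (divfK (lt0r_neq0 rq_gt0)) -powRM ?divr_ge0 ?(ltW r_gt0) //.
by rewrite (divfK (lt0r_neq0 r_gt0)).
Qed.

Lemma G_reserve_ge0 x : 0 <= G x.
Proof. by rewrite /G_reserve; case: ifP => // _; case: ifP => // _; exact: powR_ge0. Qed.

Lemma G_reserve_le1 x : G x <= 1.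
Proof.
rewrite /G_reserve; case: ifP => // x0; case: ifP => // xr.
rewrite [leRHS](_ : 1 = powR 1 q); last by rewrite powR1.
have xr0 : 0 <= x / r by rewrite divr_ge0 ?(ltW r_gt0) // leNgt x0.
apply: ge0_ler_powR; rewrite ?nnegrE ?(ltW q_gt0) //.
by rewrite ler_pdivrMr // mul1r.
Qed.

Lemma G_reserve_nd : {homo G : x y / x <= y}.
Proof.
move=> x y xy; rewrite /G_reserve.
case: ifP => x0; first by case: ifP => // _; case: ifP => // _; exact: powR_ge0.
have y0 : (y < 0) = false by apply/negbTE; rewrite -leNgt (le_trans _ xy) // leNgt x0.
rewrite y0; case: ifP => xr; last first.
  by rewrite (_ : (y <= r) = false) //; apply/negbTE; rewrite -ltNge (lt_le_trans _ xy) // ltNge xr.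
case: ifP => yr; last by have := G_reserve_le1 x; rewrite /G_reserve x0 xr.
have xr0 : 0 <= x / r by rewrite divr_ge0 ?(ltW r_gt0) // leNgt x0.
have yr0 : 0 <= y / r by rewrite divr_ge0 ?(ltW r_gt0) // leNgt y0.
by apply: ge0_ler_powR; rewrite ?nnegrE ?(ltW q_gt0) ?ler_pM2r ?invr_gt0.
Qed.

Lemma measurable_G_reserve (D : set R) : measurable D -> measurable_fun D G.
Proof. by move=> mD; apply: nondecreasing_measurable G_reserve_nd. Qed.

Lemma Gpow_primitive_derive x : 0 < x -> Gpow_primitive^`()%classic x = Gpow x.
Proof.
move=> x0; rewrite /Gpow_primitive derive1Mr; last first.
  by apply: derivable_powR; rewrite in_itv /= x0.
rewrite powR_derive1 ?in_itv /= ?x0 // /Gpow p_eq addrK -p_eq.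
by field; rewrite !gt_eqF.
Qed.

Lemma Gpow_primitive_r : Gpow_primitive r = r - r / N%:R.
Proof. by rewrite /Gpow_primitive powR_p ?ltW //; field; rewrite !gt_eqF. Qed.

Lemma integral_G_reserve_below a b : 0 <= a -> a <= b -> b <= r ->
  (\int[lebesgue_measure]_(x in `[a, b]) (G x)%:E =
   (Gpow_primitive b - Gpow_primitive a)%:E)%E.
Proof.
move=> a0; rewrite le_eqVlt => /predU1P[<-|ab] br.
  rewrite subrr set_itv1; apply: null_set_integral => //.
    by apply/measurable_EFinP; exact: measurable_G_reserve.
  exact: lebesgue_measure_set1.
rewrite (@eq_integral _ _ _ lebesgue_measure _ (fun x => (Gpow x)%:E)); last first.
  move=> x; rewrite inE /= in_itv /= => /andP[ax xb]; congr (_%:E); apply: G_reserveE.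
  by rewrite (le_trans a0 ax) (le_trans xb br).
rewrite EFinB; apply: continuous_FTC2 => //.
- apply: derivable_oo_LRcontinuous_within.
  exact: powRMr_derivable_oo_LRcontinuous q_gt0 a0 ab.
- exact: powRMr_derivable_oo_LRcontinuous p_gt0 a0 ab.
- move=> x; rewrite in_itv /= => /andP[ax _]; apply: Gpow_primitive_derive.
  exact: le_lt_trans ax.
Qed.

Lemma integral_G_reserve_above (i : interval R) : {in i, forall x, r < x} ->
  (\int[lebesgue_measure]_(x in [set` i]) (G x)%:E = lebesgue_measure [set` i])%E.
Proof.
move=> ir; rewrite -[RHS]mul1e -integral_cst //; apply: eq_integral => x.
rewrite inE /= => /ir rx.
by rewrite /G_reserve ltNge (le_trans (ltW r_gt0) (ltW rx)) /= leNgt rx.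
Qed.

Lemma integral_G_reserve a b : 0 <= a -> a <= b ->
  (\int[lebesgue_measure]_(x in `[a, b]) (G x)%:E =
   (G_primitive b - G_primitive a)%:E)%E.
Proof.
move=> a0 ab; rewrite /G_primitive.
have [br|rb] := leP b r; first by rewrite (le_trans ab br) integral_G_reserve_below.
have [ar|ra] := leP a r.
  rewrite (@itv_bndbnd_setU _ _ _ (BRight r)) ?bnd_simp ?(ltW rb) //.
  rewrite ge0_integral_setU //=; last 3 first.
  - by apply: measurableT_comp => //; apply: measurable_G_reserve; exact: measurableU.
  - by move=> x _; rewrite lee_fin; exact: G_reserve_ge0.
  - apply/disj_setPS => x [] /=; rewrite !in_itv /= => /andP[_ xr] /andP[rx _].
    by move: (lt_le_trans rx xr); rewrite ltxx.
  rewrite integral_G_reserve_below // integral_G_reserve_above; last first.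
    by move=> x; rewrite in_itv /= => /andP[].
  rewrite lebesgue_measure_itv /= lte_fin rb -!EFinD Gpow_primitive_r.
  by congr (_%:E); ring.
rewrite integral_G_reserve_above; last first.
  by move=> x; rewrite in_itv /= => /andP[ax _]; apply: lt_le_trans ax.
rewrite lebesgue_measure_itv /= lte_fin.
move: ab; rewrite le_eqVlt => /predU1P[->|ab]; first by rewrite ltxx subrr.
by rewrite ab -EFinB; congr (_%:E); ring.
Qed.

Definition revenue_share (x : R) : R :=
  if x < 0 then 0
  else if x <= r then powR x p / powR r q / N%:R
  else r / N%:R.

Lemma revenue_share_ge0 x : 0 <= revenue_share x.
Proof.
rewrite /revenue_share; case: ifP => // _; case: ifP => _.
  by rewrite !divr_ge0 ?powR_ge0 ?ltW.
by rewrite divr_ge0 ?ltW.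
Qed.

Lemma revenue_share_nd : {homo revenue_share : x y / x <= y}.
Proof.
move=> x y xy; rewrite /revenue_share.
case: ifP => x0; first by have := revenue_share_ge0 y; rewrite /revenue_share.
have y0 : (y < 0) = false by apply/negbTE; rewrite -leNgt (le_trans _ xy) // leNgt x0.
have x_ge0 : 0 <= x by rewrite leNgt x0.
rewrite y0; case: ifP => xr; last first.
  by rewrite (_ : (y <= r) = false) //; apply/negbTE; rewrite -ltNge (lt_le_trans _ xy) // ltNge xr.
case: ifP => yr.
  rewrite !ler_pM2r ?invr_gt0 //.
  by apply: ge0_ler_powR; rewrite ?nnegrE ?(ltW p_gt0) // (le_trans x_ge0).
rewrite ler_pM2r ?invr_gt0 // ler_pdivrMr // -powR_p ?(ltW r_gt0) //.
by apply: ge0_ler_powR; rewrite ?nnegrE ?(ltW p_gt0) ?(ltW r_gt0).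
Qed.

Lemma measurable_revenue_share : measurable_fun setT revenue_share.
Proof. exact: nondecreasing_measurable revenue_share_nd. Qed.

Lemma revenue_share_highest h : 0 <= h -> h * G h - G_primitive h = revenue_share h.
Proof.
move=> h0; rewrite /revenue_share /G_primitive ltNge h0 /=.
case: ifP => hr; last by rewrite /G_reserve ltNge h0 /= hr mulr1 opprB addrC subrK.
rewrite G_reserveE ?h0 ?hr // /Gpow /Gpow_primitive powR_p //.
by field; rewrite !gt_eqF.
Qed.

Lemma revenue_share_second s : 0 <= s -> k * revenue_share s <= G_primitive s.
Proof.
move=> s0; rewrite /revenue_share /G_primitive ltNge s0 /=.
case: ifP => sr.
  rewrite [leLHS](_ : _ = Gpow_primitive s) //.
  by rewrite /Gpow_primitive; field; rewrite !gt_eqF.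
rewrite (_ : k * (r / N%:R) = r - r / N%:R); last by field; rewrite gt_eqF.
by rewrite lerD2r ltW // ltNge sr.
Qed.

Lemma spa_revenue_ge_sum_shares (v : N.-tuple R) :
  \sum_(i < N) revenue_share (tnth v i) <= spa_random_reserve_revenue N G v.
Proof.
have N_pos : (0 < N)%N by case: N N_ge2.
rewrite /spa_random_reserve_revenue /Rintegral.
rewrite integral_G_reserve ?second_highest_ge0 ?second_highest_le //=.
apply: le_trans (sum_le_highest_second_highest v N_pos revenue_share_nd) _.
rewrite opprD opprK addrA revenue_share_highest ?highest_ge0 // lerD2l.
exact/revenue_share_second/second_highest_ge0.
Qed.

Lemma integral_revenue_share_ge :
  ((L_fun N mu r / N%:R)%:E <= \int[mu]_x (revenue_share x)%:E)%E.
Proof.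
have mshare : measurable_fun setT (fun x => (revenue_share x)%:E).
  by apply/measurable_EFinP; exact: measurable_revenue_share.
have share0 x : (0 <= (revenue_share x)%:E)%E by rewrite lee_fin revenue_share_ge0.
have mlow : measurable (`[0%R, r] : set R) by [].
have mhigh : measurable (`]r, +oo[ : set R) by [].
apply: le_trans (ge0_subset_integral mu (measurableU _ _ mlow mhigh) measurableT mshare
  (fun x _ => share0 x) (@subsetT _ _)).
rewrite ge0_integral_setU //; last 2 first.
- exact: measurable_funS mshare.
- apply/disj_setPS => y []; rewrite /= !in_itv /= andbT => /andP[_ yr] ry.
  by move: (lt_le_trans ry yr); rewrite ltxx.
rewrite (@eq_integral _ _ _ mu `[0%R, r]
    (fun x => (N%:R^-1)%:E * (powR x p / powR r q)%:E)%E); last first.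
  move=> x; rewrite inE /= in_itv /= => /andP[x0 xr].
  by rewrite /revenue_share ltNge x0 /= xr -EFinM mulrC.
have mf : measurable_fun `[0%R, r] (fun x => (powR x p / powR r q)%:E).
  by apply/measurable_EFinP; exact: measurable_L_integrand.
rewrite (ge0_integralZl mu mlow mf); last 2 first.
- by move=> x _; rewrite lee_fin L_integrand_ge0.
- by rewrite lee_fin invr_ge0 ltW.
rewrite (@eq_integral _ _ _ mu `]r, +oo[ (cst (r / N%:R)%:E)); last first.
  move=> x; rewrite inE /= in_itv /= andbT => rx.
  by rewrite /revenue_share ltNge (le_trans (ltW r_gt0) (ltW rx)) /= leNgt rx.
have mu_high : (mu : measure R R) `]r, +oo[%classic = (1 - Defs.cdf mu r)%:E.
  exact: probability_itv_gt.
rewrite integral_cst // -L_integralE // mu_high -!EFinM -EFinD lee_fin.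
rewrite [leLHS](_ : _ = (N%:R^-1 * L_integral r + r / N%:R * (1 - Defs.cdf mu r))) //.
by rewrite L_funE; field; rewrite gt_eqF.
Qed.

Lemma revenue_guarantee_ge_L :
  ((L_fun N mu r)%:E <= revenue_guarantee N mu (spa_random_reserve_revenue N G))%E.
Proof.
apply: le_ereal_inf_tmp => _ [pi pi_mu <-].
have sum_shares0 v : (0 <= (\sum_(i < N) revenue_share (tnth v i))%:E)%E.
  by rewrite lee_fin sumr_ge0 // => i _; exact: revenue_share_ge0.
apply: le_trans (ge0_le_integral_nonmeasurable pi sum_shares0 _); last first.
  by move=> v; rewrite lee_fin spa_revenue_ge_sum_shares.
under eq_integral do rewrite -sumEFin.
rewrite ge0_integral_sum //; last 2 first.
- move=> i; apply/measurable_EFinP; apply: measurableT_comp.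
    exact: measurable_revenue_share.
  exact: measurable_tnth.
- by move=> i v _; rewrite lee_fin revenue_share_ge0.
rewrite (eq_bigr (fun=> \int[mu]_x (revenue_share x)%:E)%E); last first.
  move=> i _; apply: integral_tnth_PiF pi_mu _ _.
    by apply/measurable_EFinP; exact: measurable_revenue_share.
  by move=> x; rewrite lee_fin revenue_share_ge0.
apply: le_trans (_ : \sum_(i < N) (L_fun N mu r / N%:R)%:E <= _)%E; last first.
  by apply: lee_sum => i _; exact: integral_revenue_share_ge.
by rewrite sumEFin sumr_const card_ord lee_fin -[_ *+ N]mulr_natr (divfK (lt0r_neq0 N_gt0)).
Qed.

End reserve.

Definition L_integral_floor (d : R) : R :=
  powR (d / 2) p * fine (mu `](d / 2), d[%classic).

Lemma L_integral_floor_gt0 d : support01 mu -> 0 < d <= 1 -> 0 < L_integral_floor d.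
Proof.
move=> [_ supp] /andP[d0 d1]; rewrite /L_integral_floor mulr_gt0 ?powR_gt0 ?divr_gt0 //.
apply: fine_gt0; rewrite (le_lt_trans (probability_le1 _ _)) ?ltey ?andbT //.
have := supp (3 * d / 4) _ (d / 4) _.
rewrite (_ : 3 * d / 4 - d / 4 = d / 2); last by field.
rewrite (_ : 3 * d / 4 + d / 4 = d); last by field.
apply; last by rewrite divr_gt0.
by rewrite divr_ge0 ?mulr_ge0 ?ltW //=; lra.
Qed.

Lemma L_integral_ge_floor d x : 0 < d -> d <= x <= 1 -> L_integral_floor d <= L_integral x.
Proof.
move=> d0 /andP[dx x1]; have x0 : 0 < x := lt_le_trans d0 dx.
have d2_ge0 : 0 <= d / 2 by rewrite divr_ge0 // ltW.
have mI : measurable (`](d / 2), d[%classic : set R) by [].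
have mf : measurable_fun `](d / 2), d[ (fun t => (powR t p / powR x q)%:E).
  by apply/measurable_EFinP; exact: measurable_L_integrand.
rewrite -lee_fin L_integralE //.
apply: le_trans (ge0_subset_integral mu mI (measurable_itv _) _ _ _); last 3 first.
- by apply/measurable_EFinP; exact: measurable_L_integrand.
- by move=> t _; rewrite lee_fin L_integrand_ge0.
- move=> t; rewrite /= !in_itv /= => /andP[dt td].
  by rewrite (le_trans d2_ge0 (ltW dt)) (le_trans (ltW td) dx).
apply: le_trans (ge0_le_integral mu mI _ (measurable_cst (powR (d / 2) p)%:E) mf _); last first.
  move=> t; rewrite /= in_itv /= => /andP[dt td]; rewrite lee_fin.
  have xq_le1 : powR x q <= 1.
    rewrite [leRHS](_ : 1 = powR 1 q); last by rewrite powR1.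
    by apply: ge0_ler_powR; rewrite ?nnegrE ?(ltW q_gt0) ?(ltW x0).
  have t0 : 0 <= t := le_trans d2_ge0 (ltW dt).
  apply: (le_trans (y := powR t p)).
    by apply: ge0_ler_powR (ltW dt); rewrite ?nnegrE ?(ltW p_gt0).
  by rewrite ler_pdivlMr ?powR_gt0 // ler_piMr // powR_ge0.
- by move=> t _; rewrite lee_fin powR_ge0.
by rewrite integral_cst // /L_integral_floor EFinM fineK // fin_num_measure.
Qed.

Lemma price_revenue_le Lmax d x :
  (forall y, 0 < y <= 1 -> L_fun N mu y <= Lmax) -> 0 < d -> 0 <= x <= 1 ->
  x * (1 - Defs.cdf mu x) <= Num.max d (Lmax - L_integral_floor d).
Proof.
move=> L_le d0 /andP[x0 x1]; rewrite le_max.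
have [xd|dx] := ltP x d.
  apply/orP; left; apply: le_trans (ltW xd).
  by rewrite ler_piMr // lerBlDr lerDl cdf_ge0.
apply/orP; right; have x_gt0 := lt_le_trans d0 dx.
have := L_le x; rewrite x_gt0 x1 L_funE => /(_ isT).
have := @L_integral_ge_floor d x d0; rewrite dx x1 => /(_ isT).
lra.
Qed.

Lemma posted_price_lt Lmax : support01 mu ->
  (forall x, 0 < x <= 1 -> L_fun N mu x <= Lmax) -> posted_price_guarantee mu < Lmax.
Proof.
move=> supp L_le.
have Lmax_gt0 : 0 < Lmax.
  have floor1_gt0 : 0 < L_integral_floor 1.
    by apply: L_integral_floor_gt0; rewrite ?ltr01 ?lexx.
  have floor1_le : L_integral_floor 1 <= L_integral 1.
    by apply: L_integral_ge_floor; rewrite ?ltr01 ?lexx.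
  have L1_le : L_integral 1 <= L_fun N mu 1.
    by rewrite L_funE lerDl mul1r subr_ge0 cdf_le1.
  have := L_le 1; rewrite ltr01 lexx => /(_ isT); lra.
pose d := Num.min 1 (Lmax / 2).
have d_gt0 : 0 < d by rewrite lt_min ltr01 divr_gt0.
have floor_gt0 : 0 < L_integral_floor d.
  by apply: L_integral_floor_gt0; rewrite // d_gt0 ge_min lexx.
apply: le_lt_trans (_ : _ <= Num.max d (Lmax - L_integral_floor d)) _.
  apply: ge_sup; first by exists 0, 0; rewrite ?mul0r //= in_itv /= lexx ler01.
  by move=> _ [x x01 <-]; apply: price_revenue_le.
rewrite gt_max gt_min ltrBlDr ltrDl floor_gt0 andbT; apply/orP; right; lra.
Qed.

End robust_auction.

Theorem theorem3 (R : realType) (N : nat) (mu : probability R R) (rstar : R) :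
  (2 <= N)%N ->
  support01 mu ->
  0 < rstar <= 1 ->
  (forall r : R, 0 < r <= 1 -> L_fun N mu r <= L_fun N mu rstar) ->
  ((posted_price_guarantee mu)%:E <
   revenue_guarantee N mu (spa_random_reserve_revenue N (G_reserve N rstar)))%E.
Proof.
move=> N_ge2 supp /andP[rstar_gt0 _] L_max.
apply: lt_le_trans (revenue_guarantee_ge_L mu N_ge2 rstar_gt0).
by rewrite lte_fin; apply: (posted_price_lt N_ge2 supp); exact: L_max.
Qed.
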